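(* Let $M$ be a recursively enumerable language over a finite alphabet $\Sigma$. Then: (1) there exists an $\mathcal{E}^{\mathrm{mult}}$-grammar which generates $M$; (2) there exists an $\mathcal{E}^{r,\mathrm{mult}}$-grammar which generates $M$; (3) for each of the calculi $\mathcal{M}^{\mathrm{mult}}_{2015}$, $\mathcal{M}'^{\,\mathrm{mult}}_{2015}$, $\mathcal{F}^{\mathrm{mult}}_{2015}$, $\mathcal{M}^{\mathrm{mult}}_{2018}$, $\mathcal{M}'^{\,\mathrm{mult}}_{2018}$, $\mathcal{F}^{\mathrm{mult}}_{2018}$ there exists a grammar based on that calculus which generates $M$ both in the sense of s-recognition and in the sense of t-recognition.
   Context: Formulae are built from a countable set of variables and $\mathbf1$ by $\backslash,/,\cdot$ (multiplicative fragments: no $\wedge,\vee$) and the unary $\langle\rangle$, $[]^{-1}$, $!$. Bracket-free calculi: sequents $\Pi\to A$ with $\Pi$ a finite (possibly empty, $\Lambda$) sequence of formulae without bracket modalities. $\mathcal{E}^{\mathrm{mult}}$ has axioms $A\to A$, $\Lambda\to\mathbf1$ and rules: ($\backslash L$) from $\Pi\to A$ and $\Delta_1,B,\Delta_2\to C$ infer $\Delta_1,\Pi,A\backslash B,\Delta_2\to C$; ($\backslash R$) from $A,\Pi\to B$ infer $\Pi\to A\backslash B$; ($/L$) from $\Pi\to A$ and $\Delta_1,B,\Delta_2\to C$ infer $\Delta_1,B/A,\Pi,\Delta_2\to C$; ($/R$) from $\Pi,A\to B$ infer $\Pi\to B/A$; ($\cdot L$) from $\Delta_1,A,B,\Delta_2\to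 C$ infer $\Delta_1,A\cdot B,\Delta_2\to C$; ($\cdot R$) from $\Gamma\to A$ and $\Delta\to B$ infer $\Gamma,\Delta\to A\cdot B$; ($\mathbf1L$) from $\Delta_1,\Delta_2\to C$ infer $\Delta_1,\mathbf1,\Delta_2\to C$; ($!R$) from $!A_1,\dots,!A_n\to B$ infer $!A_1,\dots,!A_n\to!B$ ($n\ge0$); ($!L$) from $\Delta_1,A,\Delta_2\to C$ infer $\Delta_1,!A,\Delta_2\to C$; ($!P_1$) from $\Delta_1,!A,\Phi,\Delta_2\to C$ infer $\Delta_1,\Phi,!A,\Delta_2\to C$; ($!P_2$) from $\Delta_1,\Phi,!A,\Delta_2\to C$ infer $\Delta_1,!A,\Phi,\Delta_2\to C$; ($!C$) from $\Delta_1,!A,!A,\Delta_2\to C$ infer $\Delta_1,!A,\Delta_2\to C$; ($!W$) from $\Delta_1,\Delta_2\to C$ infer $\Delta_1,!A,\Delta_2\to C$; (cut) from $\Pi\to A$ and $\Delta_1,A,\Delta_2\to C$ infer $\Delta_1,\Pi,\Delta_2\to C$. $\mathcal{E}^{r,\mathrm{mult}}$ is $\mathcal{E}^{\mathrm{mult}}$ without $!W$. Bracketed calculi with stoups: a stoup is a finite multiset of formulae; a tree term is a formula or $[\Xi]$; a meta-formula is $\zeta;\Gamma$ ($\zeta$ a stoup, $\Gamma$ a finite sequence of tree terms, empty $\Lambda$), $\varnothing;\Gamma$ written $\Gamma$; comma is concatenation / multiset union; sequents $\Xi\to C$; $\Xi(\Theta)$ designates an occurrence of a meta-formula $\Theta$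 which is $\Xi$ itself or the content of a bracket $[\Theta]$ at any depth. Common rules: axioms $A\to A$, $\Lambda\to\mathbf1$; ($/L$) from $\zeta_1;\Gamma\to B$ and $\Xi(\zeta_2;\Delta_1,C,\Delta_2)\to D$ infer $\Xi(\zeta_1,\zeta_2;\Delta_1,C/B,\Gamma,\Delta_2)\to D$; ($/R$) from $\zeta;\Gamma,B\to C$ infer $\zeta;\Gamma\to C/B$; ($\backslash L$) from $\zeta_1;\Gamma\to A$ and $\Xi(\zeta_2;\Delta_1,C,\Delta_2)\to D$ infer $\Xi(\zeta_1,\zeta_2;\Delta_1,\Gamma,A\backslash C,\Delta_2)\to D$; ($\backslash R$) from $\zeta;A,\Gamma\to C$ infer $\zeta;\Gamma\to A\backslash C$; ($\cdot L$) from $\Xi(\zeta;\Delta_1,A,B,\Delta_2)\to D$ infer $\Xi(\zeta;\Delta_1,A\cdot B,\Delta_2)\to D$; ($\cdot R$) from $\zeta_1;\Delta\to A$, $\zeta_2;\Gamma\to B$ infer $\zeta_1,\zeta_2;\Delta,\Gamma\to A\cdot B$; ($\mathbf1L$) from $\Xi(\zeta;\Delta_1,\Delta_2)\to A$ infer $\Xi(\zeta;\Delta_1,\mathbf1,\Delta_2)\to A$; ($[]^{-1}L$) from $\Xi(\zeta;\Delta_1,A,\Delta_2)\to B$ infer $\Xi(\zeta;\Delta_1,[[]^{-1}A],\Delta_2)\to B$; ($[]^{-1}R$) from $[\Xi]\to A$ infer $\Xi\to[]^{-1}A$; ($\langle\rangle L$) from $\Xi(\zeta;\Delta_1,[A],\Delta_2)\to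 B$ infer $\Xi(\zeta;\Delta_1,\langle\rangle A,\Delta_2)\to B$; ($\langle\rangle R$) from $\Xi\to A$ infer $[\Xi]\to\langle\rangle A$; ($!L$) from $\Xi(\zeta,A;\Gamma_1,\Gamma_2)\to B$ infer $\Xi(\zeta;\Gamma_1,!A,\Gamma_2)\to B$; ($!P$) from $\Xi(\zeta;\Gamma_1,A,\Gamma_2)\to B$ infer $\Xi(\zeta,A;\Gamma_1,\Gamma_2)\to B$. $\mathcal{M}^{\mathrm{mult}}_{2015}$ adds ($!R$) from $\zeta;\Lambda\to B$ infer $\zeta;\Lambda\to!B$ and ($!C$) from $\Xi(\zeta_1,\zeta_2;\Gamma_1,[\zeta_2;\Gamma_2],\Gamma_3)\to B$ infer $\Xi(\zeta_1,\zeta_2;\Gamma_1,\Gamma_2,\Gamma_3)\to B$ if $\zeta_2\ne\varnothing$. $\mathcal{M}'^{\,\mathrm{mult}}_{2015}$ adds ($!R'$) as $!R$ but only if $\zeta\ne\varnothing$, and ($!C'$) from $\Xi(\zeta_1,\zeta_2;\Gamma_1,[\zeta',\zeta_2;\Gamma_2],\Gamma_3)\to C$ infer $\Xi(\zeta_1,\zeta_2,\zeta';\Gamma_1,\Gamma_2,\Gamma_3)\to C$ if $\zeta_2\ne\varnothing$. $\mathcal{M}^{\mathrm{mult}}_{2018}$ adds ($!R$) from $!A\to B$ infer $!A\to!B$ and ($!C$) from $\Xi(\zeta,A;\Gamma_1,[A;\Gamma_2],\Gamma_3)\to B$ infer $\Xi(\zeta,A;\Gamma_1,[[\Gamma_2]],\Gamma_3)\to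 B$. $\mathcal{M}'^{\,\mathrm{mult}}_{2018}$ adds ($!R'$) from $A;\Lambda\to B$ infer $A;\Lambda\to!B$ and ($!C'$) from $\Xi(\zeta,A;\Gamma_1,[\zeta',A;\Gamma_2],\Gamma_3)\to B$ infer $\Xi(\zeta,A;\Gamma_1,[[\zeta';\Gamma_2]],\Gamma_3)\to B$. Cut is not a rule of these four. Stoup-free bracketed calculi $\mathcal{F}^{\mathrm{mult}}_{2015}$, $\mathcal{F}^{\mathrm{mult}}_{2018}$: meta-formulae are sequences of tree terms (all stoups empty); rules are the stoup-free versions of the common rules above (drop all stoups), except $!L$ is: from $\Xi(\Delta_1,A,\Delta_2)\to C$ infer $\Xi(\Delta_1,!A,\Delta_2)\to C$, together with ($!P_1$) from $\Xi(\Delta_1,!A,\Phi,\Delta_2)\to C$ infer $\Xi(\Delta_1,\Phi,!A,\Delta_2)\to C$, ($!P_2$) the converse, and (cut) from $\Pi\to A$ and $\Xi(\Gamma_1,A,\Gamma_2)\to C$ infer $\Xi(\Gamma_1,\Pi,\Gamma_2)\to C$ (no $!P$). $\mathcal{F}^{\mathrm{mult}}_{2015}$ adds ($!R$) from $!A_1,\dots,!A_n\to B$ infer $!A_1,\dots,!A_n\to!B$ ($n\ge1$) and ($!C$) from $\Xi(!A_1,\dots,!A_n,\Gamma_1,[!A_1,\dots,!A_n,\Gamma_2],\Gamma_3)\to C$ infer $\Xi(!A_1,\dots,!A_n,\Gamma_1,\Gamma_2,\Gamma_3)\to C$ ($n\ge1$); $\mathcal{F}^{\mathrm{mult}}_{2018}$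 adds ($!R$) from $!A\to B$ infer $!A\to!B$ and ($!C$) from $\Xi(!A,\Gamma_1,[!A,\Gamma_2],\Gamma_3)\to C$ infer $\Xi(!A,\Gamma_1,[[\Gamma_2]],\Gamma_3)\to C$. Grammars: an $\mathcal{L}$-grammar is a triple $\langle\Sigma,\rhd,H\rangle$ with $\Sigma$ a finite alphabet, $H$ a formula and $\rhd$ a finite relation between letters of $\Sigma$ and formulae. For a bracket-free calculus, $a_1\dots a_n$ is accepted if there are $A_i$ with $a_i\rhd A_i$ and $A_1,\dots,A_n\to H$ derivable; the grammar generates the set of accepted words. For bracketed calculi: s-recognition accepts $a_1\dots a_n$ if $A_1,\dots,A_n\to H$ (no brackets, empty stoups) is derivable for some $a_i\rhd A_i$; t-recognition accepts $a_1\dots a_n$ if $\Pi\to H$ is derivable for some meta-formula $\Pi$ with empty stoups which becomes $A_1,\dots,A_n$ after removing all brackets (but not bracket modalities), for some $a_i\rhd A_i$. The grammar generates $M$ in a given sense if the set of words accepted in that sense equals $M$. *)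

From Stdlib Require List.
From Stdlib Require Import Permutation.
From mathcomp Require Import all_boot.

Set Implicit Arguments.
Unset Strict Implicit.
Unset Printing Implicit Defensive.

Inductive formula : Type :=
| Var  : nat -> formula
| One  : formula
| Under : formula -> formula -> formula   (* Under A B = A \ B *)
| Over  : formula -> formula -> formula   (* Over B A  = B / A *)
| Prod  : formula -> formula -> formula
| Dia   : formula -> formula
| Binv  : formula -> formula
| Bang  : formula -> formula.

Fixpoint bracket_free (A : formula) : Prop :=
  match A with
  | Var _ | One => True
  | Under A B | Over A B | Prod A B => bracket_free A /\ bracket_free B
  | Dia _ | Binv _ => False
  | Bang A => bracket_free A
  end.

Inductive ecalc := Emult | Ermult.

(* Sequents are (antecedent list, succedent); the side conditions on axioms *)
(* and !W make every derivable sequent bracket-free.                        *)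
Inductive Eder : ecalc -> seq formula -> formula -> Prop :=
| E_ax c A : bracket_free A -> Eder c [:: A] A
| E_one c : Eder c [::] One
| E_underL c Pi A B D1 D2 C :
    Eder c Pi A -> Eder c (D1 ++ B :: D2) C ->
    Eder c (D1 ++ Pi ++ Under A B :: D2) C
| E_underR c Pi A B : Eder c (A :: Pi) B -> Eder c Pi (Under A B)
| E_overL c Pi A B D1 D2 C :
    Eder c Pi A -> Eder c (D1 ++ B :: D2) C ->
    Eder c (D1 ++ Over B A :: Pi ++ D2) C
| E_overR c Pi A B : Eder c (Pi ++ [:: A]) B -> Eder c Pi (Over B A)
| E_prodL c D1 A B D2 C :
    Eder c (D1 ++ A :: B :: D2) C -> Eder c (D1 ++ Prod A B :: D2) C
| E_prodR c G D A B : Eder c G A -> Eder c D B -> Eder c (G ++ D) (Prod A B)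
| E_oneL c D1 D2 C : Eder c (D1 ++ D2) C -> Eder c (D1 ++ One :: D2) C
| E_bangR c As B :
    Eder c (map Bang As) B -> Eder c (map Bang As) (Bang B)
| E_bangL c D1 A D2 C : Eder c (D1 ++ A :: D2) C -> Eder c (D1 ++ Bang A :: D2) C
| E_bangP1 c D1 A Phi D2 C :
    Eder c (D1 ++ Bang A :: Phi ++ D2) C -> Eder c (D1 ++ Phi ++ Bang A :: D2) C
| E_bangP2 c D1 A Phi D2 C :
    Eder c (D1 ++ Phi ++ Bang A :: D2) C -> Eder c (D1 ++ Bang A :: Phi ++ D2) C
| E_bangC c D1 A D2 C :
    Eder c (D1 ++ Bang A :: Bang A :: D2) C -> Eder c (D1 ++ Bang A :: D2) C
| E_bangW D1 A D2 C :
    bracket_free A ->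
    Eder Emult (D1 ++ D2) C -> Eder Emult (D1 ++ Bang A :: D2) C
| E_cut c Pi A D1 D2 C :
    Eder c Pi A -> Eder c (D1 ++ A :: D2) C -> Eder c (D1 ++ Pi ++ D2) C.

(* A stoup (finite multiset) is represented by a list, taken up to          *)
(* permutation (see mf_equiv and the rule M_stoup below).                   *)
Inductive tterm : Type :=
| TF : formula -> tterm
| TB : seq formula -> seq tterm -> tterm.       (* a bracket [zeta; Gamma] *)

Definition mf := (seq formula * seq tterm)%type.

Definition brk (X : mf) : tterm := TB X.1 X.2.

(* contexts Xi( _ ) : the hole is the whole meta-formula or the content of *)
(* a bracket at any depth                                                  *)
Inductive mctx : Type :=
| MHole : mctx
| MIn : seq formula -> seq tterm -> mctx -> seq tterm -> mctx.

Fixpoint mfill (K : mctx) (X : mf) : mf :=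
  match K with
  | MHole => X
  | MIn z G1 K' G2 => (z, G1 ++ brk (mfill K' X) :: G2)
  end.

(* equality of meta-formulae with stoups read as multisets (at all depths) *)
Inductive tt_equiv : tterm -> tterm -> Prop :=
| tte_F A : tt_equiv (TF A) (TF A)
| tte_B z z' G G' :
    Permutation z z' -> List.Forall2 tt_equiv G G' -> tt_equiv (TB z G) (TB z' G').

Definition mf_equiv (X Y : mf) : Prop :=
  Permutation X.1 Y.1 /\ List.Forall2 tt_equiv X.2 Y.2.

Inductive mcalc := M2015 | M2015' | M2018 | M2018'.

Inductive Mder : mcalc -> mf -> formula -> Prop :=
| M_stoup v X Y C : Mder v X C -> mf_equiv X Y -> Mder v Y C
| M_ax v A : Mder v ([::], [:: TF A]) A
| M_one v : Mder v ([::], [::]) One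
| M_overL v K z1 G B z2 D1 C D2 D :
    Mder v (z1, G) B -> Mder v (mfill K (z2, D1 ++ TF C :: D2)) D ->
    Mder v (mfill K (z1 ++ z2, D1 ++ TF (Over C B) :: G ++ D2)) D
| M_overR v z G B C : Mder v (z, G ++ [:: TF B]) C -> Mder v (z, G) (Over C B)
| M_underL v K z1 G A z2 D1 C D2 D :
    Mder v (z1, G) A -> Mder v (mfill K (z2, D1 ++ TF C :: D2)) D ->
    Mder v (mfill K (z1 ++ z2, D1 ++ G ++ TF (Under A C) :: D2)) D
| M_underR v z G A C : Mder v (z, TF A :: G) C -> Mder v (z, G) (Under A C)
| M_prodL v K z D1 A B D2 D :
    Mder v (mfill K (z, D1 ++ TF A :: TF B :: D2)) D ->
    Mder v (mfill K (z, D1 ++ TF (Prod A B) :: D2)) D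
| M_prodR v z1 D z2 G A B :
    Mder v (z1, D) A -> Mder v (z2, G) B -> Mder v (z1 ++ z2, D ++ G) (Prod A B)
| M_oneL v K z D1 D2 A :
    Mder v (mfill K (z, D1 ++ D2)) A -> Mder v (mfill K (z, D1 ++ TF One :: D2)) A
| M_binvL v K z D1 A D2 B :
    Mder v (mfill K (z, D1 ++ TF A :: D2)) B ->
    Mder v (mfill K (z, D1 ++ TB [::] [:: TF (Binv A)] :: D2)) B
| M_binvR v X A : Mder v ([::], [:: brk X]) A -> Mder v X (Binv A)
| M_diaL v K z D1 A D2 B :
    Mder v (mfill K (z, D1 ++ TB [::] [:: TF A] :: D2)) B ->
    Mder v (mfill K (z, D1 ++ TF (Dia A) :: D2)) B
| M_diaR v X A : Mder v X A -> Mder v ([::], [:: brk X]) (Dia A)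
| M_bangL v K z A G1 G2 B :
    Mder v (mfill K (z ++ [:: A], G1 ++ G2)) B ->
    Mder v (mfill K (z, G1 ++ TF (Bang A) :: G2)) B
| M_bangP v K z G1 A G2 B :
    Mder v (mfill K (z, G1 ++ TF A :: G2)) B ->
    Mder v (mfill K (z ++ [:: A], G1 ++ G2)) B
| M15_bangR z B : Mder M2015 (z, [::]) B -> Mder M2015 (z, [::]) (Bang B)
| M15_bangC K z1 z2 G1 G2 G3 B :
    z2 <> [::] ->
    Mder M2015 (mfill K (z1 ++ z2, G1 ++ TB z2 G2 :: G3)) B ->
    Mder M2015 (mfill K (z1 ++ z2, G1 ++ G2 ++ G3)) B
| M15'_bangR z B : z <> [::] -> Mder M2015' (z, [::]) B -> Mder M2015' (z, [::]) (Bang B)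
| M15'_bangC K z1 z2 z' G1 G2 G3 C :
    z2 <> [::] ->
    Mder M2015' (mfill K (z1 ++ z2, G1 ++ TB (z' ++ z2) G2 :: G3)) C ->
    Mder M2015' (mfill K (z1 ++ z2 ++ z', G1 ++ G2 ++ G3)) C
| M18_bangR A B :
    Mder M2018 ([::], [:: TF (Bang A)]) B -> Mder M2018 ([::], [:: TF (Bang A)]) (Bang B)
| M18_bangC K z A G1 G2 G3 B :
    Mder M2018 (mfill K (z ++ [:: A], G1 ++ TB [:: A] G2 :: G3)) B ->
    Mder M2018 (mfill K (z ++ [:: A], G1 ++ TB [::] [:: TB [::] G2] :: G3)) B
| M18'_bangR A B :
    Mder M2018' ([:: A], [::]) B -> Mder M2018' ([:: A], [::]) (Bang B)
| M18'_bangC K z A z' G1 G2 G3 B :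
    Mder M2018' (mfill K (z ++ [:: A], G1 ++ TB (z' ++ [:: A]) G2 :: G3)) B ->
    Mder M2018' (mfill K (z ++ [:: A], G1 ++ TB [::] [:: TB z' G2] :: G3)) B.

Inductive ftt : Type :=
| FF : formula -> ftt
| FB : seq ftt -> ftt.

Inductive fctx : Type :=
| FHole : fctx
| FIn : seq ftt -> fctx -> seq ftt -> fctx.

Fixpoint ffill (K : fctx) (X : seq ftt) : seq ftt :=
  match K with
  | FHole => X
  | FIn G1 K' G2 => G1 ++ FB (ffill K' X) :: G2
  end.

Definition fbangs (As : seq formula) : seq ftt := map (fun A => FF (Bang A)) As.

Inductive fcalc := F2015 | F2018.

Inductive Fder : fcalc -> seq ftt -> formula -> Prop :=
| F_ax v A : Fder v [:: FF A] A
| F_one v : Fder v [::] One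
| F_overL v K G B D1 C D2 D :
    Fder v G B -> Fder v (ffill K (D1 ++ FF C :: D2)) D ->
    Fder v (ffill K (D1 ++ FF (Over C B) :: G ++ D2)) D
| F_overR v G B C : Fder v (G ++ [:: FF B]) C -> Fder v G (Over C B)
| F_underL v K G A D1 C D2 D :
    Fder v G A -> Fder v (ffill K (D1 ++ FF C :: D2)) D ->
    Fder v (ffill K (D1 ++ G ++ FF (Under A C) :: D2)) D
| F_underR v G A C : Fder v (FF A :: G) C -> Fder v G (Under A C)
| F_prodL v K D1 A B D2 D :
    Fder v (ffill K (D1 ++ FF A :: FF B :: D2)) D ->
    Fder v (ffill K (D1 ++ FF (Prod A B) :: D2)) D
| F_prodR v D G A B : Fder v D A -> Fder v G B -> Fder v (D ++ G) (Prod A B)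
| F_oneL v K D1 D2 A :
    Fder v (ffill K (D1 ++ D2)) A -> Fder v (ffill K (D1 ++ FF One :: D2)) A
| F_binvL v K D1 A D2 B :
    Fder v (ffill K (D1 ++ FF A :: D2)) B ->
    Fder v (ffill K (D1 ++ FB [:: FF (Binv A)] :: D2)) B
| F_binvR v X A : Fder v [:: FB X] A -> Fder v X (Binv A)
| F_diaL v K D1 A D2 B :
    Fder v (ffill K (D1 ++ FB [:: FF A] :: D2)) B ->
    Fder v (ffill K (D1 ++ FF (Dia A) :: D2)) B
| F_diaR v X A : Fder v X A -> Fder v [:: FB X] (Dia A)
| F_bangL v K D1 A D2 C :
    Fder v (ffill K (D1 ++ FF A :: D2)) C ->
    Fder v (ffill K (D1 ++ FF (Bang A) :: D2)) C
| F_bangP1 v K D1 A Phi D2 C :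
    Fder v (ffill K (D1 ++ FF (Bang A) :: Phi ++ D2)) C ->
    Fder v (ffill K (D1 ++ Phi ++ FF (Bang A) :: D2)) C
| F_bangP2 v K D1 A Phi D2 C :
    Fder v (ffill K (D1 ++ Phi ++ FF (Bang A) :: D2)) C ->
    Fder v (ffill K (D1 ++ FF (Bang A) :: Phi ++ D2)) C
| F_cut v Pi A K G1 G2 C :
    Fder v Pi A -> Fder v (ffill K (G1 ++ FF A :: G2)) C ->
    Fder v (ffill K (G1 ++ Pi ++ G2)) C
| F15_bangR As B :
    As <> [::] -> Fder F2015 (fbangs As) B -> Fder F2015 (fbangs As) (Bang B)
| F15_bangC K As G1 G2 G3 C :
    As <> [::] ->
    Fder F2015 (ffill K (fbangs As ++ G1 ++ FB (fbangs As ++ G2) :: G3)) C ->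
    Fder F2015 (ffill K (fbangs As ++ G1 ++ G2 ++ G3)) C
| F18_bangR A B :
    Fder F2018 [:: FF (Bang A)] B -> Fder F2018 [:: FF (Bang A)] (Bang B)
| F18_bangC K A G1 G2 G3 C :
    Fder F2018 (ffill K (FF (Bang A) :: G1 ++ FB (FF (Bang A) :: G2) :: G3)) C ->
    Fder F2018 (ffill K (FF (Bang A) :: G1 ++ FB [:: FB G2] :: G3)) C.

(* L-grammar <Sigma, |>, H>; the finite relation |> is given by a finite list *)
Record grammar (Sigma : Type) := Grammar {
  lex : seq (Sigma * formula)%type;
  target : formula
}.

Definition assigns (Sigma : Type) (g : grammar Sigma) (w : seq Sigma)
  (As : seq formula) : Prop :=
  List.Forall2 (fun a A => List.In (a, A) (lex g)) w As.

Definition E_accepts (c : ecalc) (Sigma : Type) (g : grammar Sigma) (w : seq Sigma) :=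
  exists As, assigns g w As /\ Eder c As (target g).

Definition E_generates (c : ecalc) (Sigma : Type) (g : grammar Sigma)
  (M : seq Sigma -> Prop) := forall w, M w <-> E_accepts c g w.

Fixpoint tt_nostoup (t : tterm) : Prop :=
  match t with
  | TF _ => True
  | TB z G => z = [::] /\
      (fix go (l : seq tterm) : Prop :=
         match l with [::] => True | t' :: l' => tt_nostoup t' /\ go l' end) G
  end.

Definition mf_nostoup (X : mf) : Prop := X.1 = [::] /\ List.Forall tt_nostoup X.2.

Fixpoint tt_flat (t : tterm) : seq formula :=
  match t with
  | TF A => [:: A]
  | TB _ G => flatten (map tt_flat G)
  end.

Definition mf_flat (X : mf) : seq formula := flatten (map tt_flat X.2).

Definition M_s_accepts (v : mcalc) (Sigma : Type) (g : grammar Sigma) (w : seq Sigma) :=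
  exists As, assigns g w As /\ Mder v ([::], map TF As) (target g).

Definition M_t_accepts (v : mcalc) (Sigma : Type) (g : grammar Sigma) (w : seq Sigma) :=
  exists As (Pi : mf), assigns g w As /\ mf_nostoup Pi /\ mf_flat Pi = As /\
                       Mder v Pi (target g).

Definition M_s_generates (v : mcalc) (Sigma : Type) (g : grammar Sigma)
  (M : seq Sigma -> Prop) := forall w, M w <-> M_s_accepts v g w.

Definition M_t_generates (v : mcalc) (Sigma : Type) (g : grammar Sigma)
  (M : seq Sigma -> Prop) := forall w, M w <-> M_t_accepts v g w.

Fixpoint ftt_flat (t : ftt) : seq formula :=
  match t with
  | FF A => [:: A]
  | FB G => flatten (map ftt_flat G)
  end.

Definition F_s_accepts (v : fcalc) (Sigma : Type) (g : grammar Sigma) (w : seq Sigma) :=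
  exists As, assigns g w As /\ Fder v (map FF As) (target g).

Definition F_t_accepts (v : fcalc) (Sigma : Type) (g : grammar Sigma) (w : seq Sigma) :=
  exists As (Pi : seq ftt), assigns g w As /\ flatten (map ftt_flat Pi) = As /\
                            Fder v Pi (target g).

Definition F_s_generates (v : fcalc) (Sigma : Type) (g : grammar Sigma)
  (M : seq Sigma -> Prop) := forall w, M w <-> F_s_accepts v g w.

Definition F_t_generates (v : fcalc) (Sigma : Type) (g : grammar Sigma)
  (M : seq Sigma -> Prop) := forall w, M w <-> F_t_accepts v g w.

(* Recursively enumerable languages = languages of type-0 (unrestricted)    *)
(* Chomsky grammars.                                                        *)
Record t0grammar (Sigma : Type) := T0Grammar {
  nonterm : finType;
  t0rules : seq (seq (Sigma + nonterm)%type * seq (Sigma + nonterm)%type)%type;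
  t0start : nonterm;
  t0rules_lhs : forall r, List.In r t0rules ->
                  exists N, List.In (inr N) r.1
}.

Inductive t0step (Sigma : Type) (G : t0grammar Sigma) :
  seq (Sigma + nonterm G)%type -> seq (Sigma + nonterm G)%type -> Prop :=
| t0_step u v l r : List.In (l, r) (t0rules G) -> @t0step Sigma G (u ++ l ++ v) (u ++ r ++ v).

Inductive t0derives (Sigma : Type) (G : t0grammar Sigma) :
  seq (Sigma + nonterm G)%type -> seq (Sigma + nonterm G)%type -> Prop :=
| t0_refl x : @t0derives Sigma G x x
| t0_trans x y z : @t0step Sigma G x y -> @t0derives Sigma G y z -> @t0derives Sigma G x z.

Definition t0language (Sigma : Type) (G : t0grammar Sigma) (w : seq Sigma) : Prop :=
  @t0derives Sigma G [:: inr (t0start G)] (map inl w).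

Definition recursively_enumerable (Sigma : finType) (M : seq Sigma -> Prop) : Prop :=
  exists G : t0grammar Sigma, forall w, M w <-> t0language G w.

From Stdlib Require List.
From Stdlib Require Import Permutation.
From mathcomp Require Import all_boot.

(* Fix a type-0 grammar generating M.  Formulae are read in the language model whose
   points are sentential forms: a formula denotes a set of forms closed under
   derivation, the variable coding a symbol x denotes the forms derivable from x,
   products are concatenations closed under derivation, brackets and bracket
   modalities are invisible, and both !A and a stoup formula A stand for the empty
   form, provided A contains it.  Every rule of the eight calculi is sound in this
   model, so every accepted word is derivable from the start symbol.

   Conversely a derivation is replayed step by step.  A production l -> r is coded by
   L/R, where L and R are the products of the codes of the symbols of l and r.  The
   bracket-free calculi keep it under !; the bracketed ones keep []^{-1}(U . !(L/R))
   in the stoup or under !, so that the bracket created by the contraction rule is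
   consumed by []^{-1}.  In the 2018 calculi contraction leaves a double bracket
   behind; it is filled by the token <><>1, and U = !<><>1 puts the token back. *)

Fixpoint tterm_ind_nested (P : tterm -> Prop) (HF : forall A, P (TF A))
    (HB : forall z G, List.Forall P G -> P (TB z G)) (t : tterm) : P t :=
  match t with
  | TF A => HF A
  | TB z G => HB z G ((fix all (G : seq tterm) : List.Forall P G :=
      if G is t :: G' then List.Forall_cons _ (tterm_ind_nested P HF HB t) (all G')
      else List.Forall_nil _) G)
  end.

(* [List.in_app_iff] for [cat], which it does not rewrite. *)
Lemma In_cat (T : Type) (x : T) s1 s2 : List.In x (s1 ++ s2) <-> List.In x s1 \/ List.In x s2.
Proof. exact: List.in_app_iff. Qed.

Lemma In_mem (T : eqType) (x : T) s : x \in s -> List.In x s.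
Proof. by elim: s => //= y s IH; rewrite in_cons => /orP [/eqP ->|/IH]; [left|right]. Qed.

Lemma In_perm_last (T : Type) (x : T) s : List.In x s -> exists z, Permutation s (z ++ [:: x]).
Proof.
move=> Hx; have [s1 [s2 ->]] := List.in_split _ _ Hx; exists (s1 ++ s2).
by rewrite -catA; apply: Permutation_app_head; apply: (Permutation_app_comm [:: x]).
Qed.

Fixpoint tt_stoup (t : tterm) : seq formula :=
  if t is TB z G then z ++ flatten (map tt_stoup G) else [::].

Definition stl (G : seq tterm) := flatten (map tt_stoup G).
Definition fl (G : seq tterm) := flatten (map tt_flat G).
Definition stoups (X : mf) := X.1 ++ stl X.2.

Lemma stl_cat G1 G2 : stl (G1 ++ G2) = stl G1 ++ stl G2.
Proof. by rewrite /stl map_cat flatten_cat. Qed.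

Lemma fl_cat G1 G2 : fl (G1 ++ G2) = fl G1 ++ fl G2.
Proof. by rewrite /fl map_cat flatten_cat. Qed.

Lemma stl_nil : stl [::] = [::]. Proof. by []. Qed.
Lemma fl_nil : fl [::] = [::]. Proof. by []. Qed.
Lemma stl_consF A G : stl (TF A :: G) = stl G. Proof. by []. Qed.
Lemma stl_consB z G' G : stl (TB z G' :: G) = (z ++ stl G') ++ stl G. Proof. by []. Qed.
Lemma fl_consF A G : fl (TF A :: G) = A :: fl G. Proof. by []. Qed.
Lemma fl_consB z G' G : fl (TB z G' :: G) = fl G' ++ fl G. Proof. by []. Qed.

Lemma stoups_pair z G : stoups (z, G) = z ++ stl G. Proof. by []. Qed.
Lemma mf_flat_pair z G : mf_flat (z, G) = fl G. Proof. by []. Qed.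

Definition stoupsE := (stoups_pair, stl_cat, stl_consF, stl_consB, stl_nil, cats0).
Definition flE := (mf_flat_pair, fl_cat, fl_consF, fl_consB, fl_nil, cats0).

Lemma stl_mapTF As : stl (map TF As) = [::].
Proof. by elim: As. Qed.

Lemma fl_mapTF As : fl (map TF As) = As.
Proof. by elim: As => //= A As IH; rewrite fl_consF IH. Qed.

Lemma tt_nostoup_stoup t : tt_nostoup t -> tt_stoup t = [::].
Proof.
elim/tterm_ind_nested: t => [A|z G HG] //= [-> HGs] /=.
by elim: HG HGs => //= t G' Ht _ IH [/Ht -> /IH ->].
Qed.

Lemma mf_nostoup_stoups X : mf_nostoup X -> stoups X = [::].
Proof.
case: X => z G [/= ->]; rewrite /stoups /stl /=.
by elim=> //= t G' /tt_nostoup_stoup -> _ ->.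
Qed.

Lemma mf_nostoup_mapTF As : mf_nostoup ([::], map TF As).
Proof. by split=> //; elim: As => //= A As IH; constructor. Qed.

Lemma tt_equiv_refl t : tt_equiv t t.
Proof.
elim/tterm_ind_nested: t => [A|z G HG]; first exact: tte_F.
by apply: tte_B => //; elim: HG => // t G' Ht _ IH; constructor.
Qed.

Lemma Forall2_tt_equiv_flat G G' :
  List.Forall (fun t => forall t', tt_equiv t t' ->
    tt_flat t = tt_flat t' /\ Permutation (tt_stoup t) (tt_stoup t')) G ->
  List.Forall2 tt_equiv G G' -> fl G = fl G' /\ Permutation (stl G) (stl G').
Proof.
move=> HG HGG'; elim: HGG' HG => // t t' {}G {}G' Ht _ IH /List.Forall_cons_iff [/(_ _ Ht) [E1 P1]].
move/IH=> [E2 P2]; rewrite /fl /stl /= in E2 P2 *; rewrite E1 E2.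
by split=> //; apply: Permutation_app.
Qed.

Lemma tt_equiv_flat t t' : tt_equiv t t' ->
  tt_flat t = tt_flat t' /\ Permutation (tt_stoup t) (tt_stoup t').
Proof.
elim/tterm_ind_nested: t t' => [A|z G HG] t' Ht; inversion Ht as [|? z' ? G' Hz HGG']; subst.
  by [].
have [E P] := Forall2_tt_equiv_flat G G' HG HGG'.
by split=> //=; apply: Permutation_app.
Qed.

Lemma mf_equiv_flat X Y : mf_equiv X Y ->
  mf_flat X = mf_flat Y /\ Permutation (stoups X) (stoups Y).
Proof.
case=> Hz /Forall2_tt_equiv_flat [|E P].
  by apply/List.Forall_forall=> t _; apply: tt_equiv_flat.
by split=> //; apply: Permutation_app.
Qed.

Lemma mfill_split K : exists sl sr l r, forall X,
  stoups (mfill K X) = sl ++ stoups X ++ sr /\ mf_flat (mfill K X) = l ++ mf_flat X ++ r.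
Proof.
elim: K => [|z G1 K [sl [sr [l [r IH]]]] G2].
  by exists [::], [::], [::], [::] => X; rewrite !cats0.
exists (z ++ stl G1 ++ sl), (sr ++ stl G2), (fl G1 ++ l), (r ++ fl G2) => X.
have [Es Ef] := IH X; rewrite /stoups /= in Es *.
by rewrite !stoupsE Es /mf_flat /= -/(fl _) !flE -[fl (mfill K X).2]/(mf_flat _) Ef -!catA.
Qed.

Definition ffl (X : seq ftt) := flatten (map ftt_flat X).

Lemma ffl_cat X Y : ffl (X ++ Y) = ffl X ++ ffl Y.
Proof. by rewrite /ffl map_cat flatten_cat. Qed.

Lemma ffl_consF A X : ffl (FF A :: X) = A :: ffl X. Proof. by []. Qed.
Lemma ffl_consB Y X : ffl (FB Y :: X) = ffl Y ++ ffl X. Proof. by []. Qed.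

Lemma ffl_fbangs As : ffl (fbangs As) = map Bang As.
Proof. by elim: As => //= A As IH; rewrite ffl_consF IH. Qed.

Lemma ffl_nil : ffl [::] = [::]. Proof. by []. Qed.

Definition fflE := (ffl_cat, ffl_consF, ffl_consB, ffl_nil, ffl_fbangs, cats0).

Lemma ffl_mapFF As : ffl (map FF As) = As.
Proof. by elim: As => //= A As IH; rewrite ffl_consF IH. Qed.

Lemma fbangs_cat As Bs : fbangs (As ++ Bs) = fbangs As ++ fbangs Bs.
Proof. exact: map_cat. Qed.

Lemma ffill_split K : exists l r, forall X, ffl (ffill K X) = l ++ ffl X ++ r.
Proof.
elim: K => [|G1 K [l [r IH]] G2]; first by exists [::], [::] => X; rewrite cats0.
by exists (ffl G1 ++ l), (r ++ ffl G2) => X; rewrite /= !fflE IH -!catA.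
Qed.

(** * The language model of a type-0 grammar *)

Section Encoding.
Context {Sigma : finType} (Gr : t0grammar Sigma).
Local Notation sym := (Sigma + nonterm Gr)%type.

Definition der (x y : seq sym) := t0derives x y.

Lemma der_refl x : der x x.
Proof. exact: t0_refl. Qed.

Lemma der_trans {x y z} : der x y -> der y z -> der x z.
Proof. by elim=> // a b c Hab _ IH /IH; apply: t0_trans. Qed.

Lemma der_rule {l r} : List.In (l, r) (t0rules Gr) -> der l r.
Proof.
move=> Hlr; apply: t0_trans (t0_refl _).
by have := t0_step [::] [::] Hlr; rewrite /= !cats0.
Qed.

Lemma der_cat {x x' y y'} : der x x' -> der y y' -> der (x ++ y) (x' ++ y').
Proof.
have frame w1 w2 a b : der a b -> der (w1 ++ a ++ w2) (w1 ++ b ++ w2).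
  elim=> [c|{}a {}b c [u v l r Hlr] _ IH]; first exact: der_refl.
  by apply: t0_trans IH; have := t0_step (w1 ++ u) (v ++ w2) Hlr; rewrite -!catA.
move=> Hx Hy; apply: der_trans (_ : der (x' ++ y) _).
  by have := frame [::] y _ _ Hx.
by have := frame x' [::] _ _ Hy; rewrite !cats0.
Qed.

Lemma der_catl w {x y} : der x y -> der (w ++ x) (w ++ y).
Proof. exact/der_cat/der_refl. Qed.

Lemma der_catr w {x y} : der x y -> der (x ++ w) (y ++ w).
Proof. by move/der_cat; apply; apply: der_refl. Qed.

(* Left-hand sides of productions contain a nonterminal. *)
Lemma der_nil u : der [::] u -> u = [::].
Proof.
rewrite /der; move E0: [::] => x Hx; case: Hx E0 => [? <- //|a b c [u0 v0 l r Hlr] _ E].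
have [N HN] := t0rules_lhs Hlr; have := congr1 size E.
by case: l HN {Hlr E} => // ? ? _; rewrite size_cat /= addnS.
Qed.

Fixpoint sem (A : formula) : seq sym -> Prop :=
  match A with
  | Var k => fun u => if @unpickle sym k is Some x then der [:: x] u else False
  | One => fun u => u = [::]
  | Under A B => fun u => forall a, sem A a -> sem B (a ++ u)
  | Over B A => fun u => forall a, sem A a -> sem B (u ++ a)
  | Prod A B => fun u => exists a b, [/\ sem A a, sem B b & der (a ++ b) u]
  | Dia A | Binv A => sem A
  | Bang A => fun u => u = [::] /\ sem A [::]
  end.

Lemma sem_down {A u u'} : sem A u -> der u u' -> sem A u'.
Proof.
elim: A u u' => [k||A _ B IH|B IH A _|A _ B _|A IH|A IH|A _] u u' /=.
- by case: (unpickle k) => // x; apply: der_trans.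
- by move=> -> /der_nil.
- by move=> Hu Hd a /Hu/IH; apply; apply: der_catl.
- by move=> Hu Hd a /Hu/IH; apply; apply: der_catr.
- by move=> [a [b [Ha Hb Hd]]] Hd'; exists a, b; split=> //; apply: der_trans Hd'.
- exact: IH.
- exact: IH.
- by move=> [-> HA] /der_nil.
Qed.

Fixpoint csem (X : seq formula) (u : seq sym) : Prop :=
  if X is A :: X' then exists a b, [/\ sem A a, csem X' b & u = a ++ b] else u = [::].

Lemma csem_cat X Y u :
  csem (X ++ Y) u <-> exists u1 u2, [/\ csem X u1, csem Y u2 & u = u1 ++ u2].
Proof.
elim: X u => [|A X IH] u /=; split.
- by move=> Hu; exists [::], u.
- by move=> [_ [u2 [-> Hu2 ->]]].
- move=> [a [b [Ha /IH [u1 [u2 [Hu1 Hu2 ->]]] ->]]].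
  by exists (a ++ u1), u2; split=> //; [exists a, u1|rewrite catA].
- move=> [_ [u2 [[a [u1 [Ha Hu1 ->]]] Hu2 ->]]].
  by exists a, (u1 ++ u2); split=> //; [apply/IH; exists u1, u2|rewrite catA].
Qed.

Lemma csem1 A u : csem [:: A] u <-> sem A u.
Proof.
split=> [[a [_ [Ha -> ->]]]|Ha]; first by rewrite cats0.
by exists u, [::]; rewrite cats0.
Qed.

Definition nullable (As : seq formula) := forall A, List.In A As -> sem A [::].

Lemma nullable_nil : nullable [::].
Proof. by []. Qed.

Lemma nullable_cat As Bs : nullable (As ++ Bs) <-> nullable As /\ nullable Bs.
Proof.
split=> [H|[HA HB] C]; first by split=> C HC; apply: H; apply/In_cat; tauto.
by case/In_cat; [apply: HA|apply: HB].
Qed.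

Lemma csem_bangs As u : csem (map Bang As) u <-> u = [::] /\ nullable As.
Proof.
elim: As u => [|A As IH] u /=; first by split=> [->|[]] //; split=> // ? [].
split=> [[_ [b [[-> HA] /IH [-> HAs] ->]]]|[-> HAs]].
  by split=> // C [<-|/HAs].
exists [::], [::]; split=> //; first by split=> //; apply: HAs; left.
by apply/IH; split=> // C HC; apply: HAs; right.
Qed.

Lemma csem_bangsl As X u : csem (map Bang As ++ X) u <-> nullable As /\ csem X u.
Proof.
rewrite csem_cat; split=> [[_ [u2 [/csem_bangs [-> HAs] Hu2 ->]]]|[HAs Hu]] //.
by exists [::], u; split=> //; apply/csem_bangs.
Qed.

Lemma csem_bangsr As X u : csem (X ++ map Bang As) u <-> nullable As /\ csem X u.
Proof.
rewrite csem_cat; split=> [[u1 [_ [Hu1 /csem_bangs [-> HAs] ->]]]|[HAs Hu]].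
  by rewrite cats0.
by exists u, [::]; rewrite cats0; split=> //; apply/csem_bangs.
Qed.

Definition entails (X Y : seq formula) :=
  forall u, csem X u -> exists2 u', csem Y u' & der u' u.

Lemma entails_sub X Y : (forall u, csem X u -> csem Y u) -> entails X Y.
Proof. by move=> HXY u /HXY Hu; exists u => //; apply: der_refl. Qed.

Lemma entails_refl X : entails X X.
Proof. exact: entails_sub. Qed.

Lemma entails_trans X Y Z : entails X Y -> entails Y Z -> entails X Z.
Proof.
move=> HXY HYZ u /HXY [u' /HYZ [u'' Hu'' Hd'] Hd].
by exists u'' => //; apply: der_trans Hd.
Qed.

Lemma entails_frame D1 D2 {X Y} : entails X Y -> entails (D1 ++ X ++ D2) (D1 ++ Y ++ D2).
Proof.
move=> HXY u /csem_cat [u1 [_ [Hu1 /csem_cat [x [u2 [/HXY [y Hy Hd] Hu2 ->]]] ->]]].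
exists (u1 ++ y ++ u2); last exact/der_catl/der_catr.
by apply/csem_cat; exists u1, (y ++ u2); split=> //; apply/csem_cat; exists y, u2.
Qed.

Lemma entails1 X C : entails X [:: C] <-> forall u, csem X u -> sem C u.
Proof.
split=> [HX u /HX [u' /csem1 HC]|HX u /HX HC]; first exact: sem_down.
by exists u; [apply/csem1|apply: der_refl].
Qed.

Lemma entails_ctx D1 D2 {X Y C} :
  entails X Y -> entails (D1 ++ Y ++ D2) [:: C] -> entails (D1 ++ X ++ D2) [:: C].
Proof. by move=> HXY; apply: entails_trans; apply: entails_frame. Qed.

Lemma entails_one : entails [::] [:: One].
Proof. by apply/entails1=> u /= ->. Qed.

Lemma entails_overL {Pi A} B : entails Pi [:: A] -> entails (Over B A :: Pi) [:: B].
Proof.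
move/entails1=> HPi; apply/entails1=> _ [f [p [Hf /HPi Hp ->]]].
exact: Hf.
Qed.

Lemma entails_overR Pi A B : entails (Pi ++ [:: A]) [:: B] -> entails Pi [:: Over B A].
Proof.
move/entails1=> HPi; apply/entails1=> u Hu a Ha; apply: HPi.
by apply/csem_cat; exists u, a; split=> //; apply/csem1.
Qed.

Lemma entails_underL {Pi A} B : entails Pi [:: A] -> entails (Pi ++ [:: Under A B]) [:: B].
Proof.
move/entails1=> HPi; apply/entails1=> _ /csem_cat [p [f [/HPi Hp /csem1 Hf ->]]].
exact: Hf.
Qed.

Lemma entails_underR Pi A B : entails (A :: Pi) [:: B] -> entails Pi [:: Under A B].
Proof. by move/entails1=> HPi; apply/entails1=> u Hu a Ha; apply: HPi; exists a, u. Qed.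

Lemma entails_prodL A B : entails [:: Prod A B] [:: A; B].
Proof.
move=> u /csem1 [a [b [Ha Hb Hd]]]; exists (a ++ b) => //.
by exists a, b; split=> //; apply/csem1.
Qed.

Lemma entails_prodR {X Y A B} :
  entails X [:: A] -> entails Y [:: B] -> entails (X ++ Y) [:: Prod A B].
Proof.
move=> /entails1 HX /entails1 HY; apply/entails1=> _ /csem_cat [x [y [Hx Hy ->]]].
by exists x, y; split; [apply: HX|apply: HY|apply: der_refl].
Qed.

Lemma entails_oneL : entails [:: One] [::].
Proof. by apply: entails_sub=> u /csem1 ->. Qed.

Lemma entails_diaL A : entails [:: Dia A] [:: A].
Proof. exact: entails_refl. Qed.

Lemma entails_binvL A : entails [:: Binv A] [:: A].
Proof. exact: entails_refl. Qed.

Lemma entails_bangL A : entails [:: Bang A] [:: A].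
Proof. by apply: entails_sub=> u /csem1 [-> HA]; apply/csem1. Qed.

Lemma entails_bangW A : entails [:: Bang A] [::].
Proof. by apply: entails_sub=> u /csem1 [->]. Qed.

Lemma entails_bangR As B : entails (map Bang As) [:: B] -> entails (map Bang As) [:: Bang B].
Proof.
move/entails1=> HB; apply/entails1=> u Hu.
by have /csem_bangs [Eu _] := Hu; split=> //; rewrite -Eu; apply: HB.
Qed.

Lemma entails_bangs_right As X : entails (map Bang As ++ X) (X ++ map Bang As).
Proof. by apply: entails_sub=> u /csem_bangsl Hu; apply/csem_bangsr. Qed.

Lemma entails_bangs_left As X : entails (X ++ map Bang As) (map Bang As ++ X).
Proof. by apply: entails_sub=> u /csem_bangsr Hu; apply/csem_bangsl. Qed.

Lemma entails_bangs_dup As X Y :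
  entails (map Bang As ++ X ++ Y) (map Bang As ++ X ++ map Bang As ++ Y).
Proof.
apply: entails_sub=> u /csem_bangsl [HAs /csem_cat [x [y [Hx Hy ->]]]].
apply/csem_bangsl; split=> //; apply/csem_cat; exists x, y; split=> //.
exact/csem_bangsl.
Qed.

(** * Soundness *)

Lemma E_sound c X C : Eder c X C -> entails X [:: C].
Proof.
elim=> {c X C}.
- by move=> c A _; apply: entails_refl.
- by move=> c; apply: entails_one.
- move=> c Pi A B D1 D2 C _ HPi _ H.
  by move: (entails_ctx D1 D2 (entails_underL B HPi) H); rewrite -catA.
- by move=> c Pi A B _; apply: entails_underR.
- by move=> c Pi A B D1 D2 C _ HPi _; apply: (entails_ctx D1 D2 (entails_overL B HPi)).
- by move=> c Pi A B _; apply: entails_overR.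
- by move=> c D1 A B D2 C _; apply: (entails_ctx D1 D2 (entails_prodL A B)).
- by move=> c X Y A B _ HX _ HY; apply: entails_prodR.
- by move=> c D1 D2 C _; apply: (entails_ctx D1 D2 entails_oneL).
- by move=> c As B _; apply: entails_bangR.
- by move=> c D1 A D2 C _; apply: (entails_ctx D1 D2 (entails_bangL A)).
- move=> c D1 A Phi D2 C _ H.
  by move: (entails_ctx D1 D2 (entails_bangs_left [:: A] Phi) H); rewrite -catA.
- move=> c D1 A Phi D2 C _ H; rewrite (catA Phi [:: Bang A]) in H.
  exact: (entails_ctx D1 D2 (entails_bangs_right [:: A] Phi) H).
- by move=> c D1 A D2 C _; apply: (entails_ctx D1 D2 (entails_bangs_dup [:: A] [::] [::])).
- by move=> D1 A D2 C _ _; apply: (entails_ctx D1 D2 (entails_bangW A)).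
- by move=> c Pi A D1 D2 C _ HPi _; apply: (entails_ctx D1 D2 HPi).
Qed.

Lemma nullable_incl As Bs : List.incl As Bs -> nullable Bs -> nullable As.
Proof. by move=> HAB HBs A /HAB /HBs. Qed.

(* Stoup formulae, at any depth, behave as !-formulae. *)
Definition msem (X : mf) u := nullable (stoups X) /\ csem (mf_flat X) u.

Definition mentails (X Y : mf) := forall u, msem X u -> exists2 u', msem Y u' & der u' u.

Definition msound (X : mf) C := nullable (stoups X) -> entails (mf_flat X) [:: C].

Lemma msound_mentails X Y C : mentails X Y -> msound Y C -> msound X C.
Proof.
move=> HXY HY HX; apply/entails1=> u Hu.
have [u' [/HY /entails1 HC Hu'] Hd] := HXY u (conj HX Hu).
exact: sem_down (HC _ Hu') Hd.
Qed.

Lemma mentails_fill K X Y : mentails X Y -> mentails (mfill K X) (mfill K Y).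
Proof.
have [sl [sr [l [r HK]]]] := mfill_split K.
move=> HXY u []; rewrite /msem !(proj1 (HK _)) !(proj2 (HK _)).
case/nullable_cat=> Hl /nullable_cat [HX Hr].
move=> /csem_cat [u1 [_ [Hu1 /csem_cat [x [u2 [Hx Hu2 ->]]] ->]]].
have [y [HY Hy] Hd] := HXY x (conj HX Hx).
exists (u1 ++ y ++ u2); last exact/der_catl/der_catr.
split; first by apply/nullable_cat; split=> //; apply/nullable_cat.
by apply/csem_cat; exists u1, (y ++ u2); split=> //; apply/csem_cat; exists y, u2.
Qed.

Lemma msound_fill K X Y C : mentails X Y -> msound (mfill K Y) C -> msound (mfill K X) C.
Proof. by move/(mentails_fill K); apply: msound_mentails. Qed.

Lemma mentails_intro X Y : List.incl (stoups Y) (stoups X) ->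
  (nullable (stoups X) -> entails (mf_flat X) (mf_flat Y)) -> mentails X Y.
Proof.
move=> Hs HXY u [HX /(HXY HX) [u' Hu' Hd]].
by exists u' => //; split=> //; apply: nullable_incl HX.
Qed.

Lemma mentails_incl X Y : mf_flat X = mf_flat Y -> List.incl (stoups Y) (stoups X) ->
  mentails X Y.
Proof. by move=> Ef Hs; apply: mentails_intro => // _; rewrite Ef; apply: entails_refl. Qed.

Ltac stoup_incl := move=> ?; rewrite ?stoupsE !In_cat; tauto.

Lemma mentails_local z D1 D2 S S' : stl S' = [::] -> entails (fl S) (fl S') ->
  mentails (z, D1 ++ S ++ D2) (z, D1 ++ S' ++ D2).
Proof.
move=> HS' HSS'; apply: mentails_intro => [|_]; first by rewrite !stoupsE HS' /=; stoup_incl.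
by rewrite !flE; apply: entails_frame.
Qed.

Lemma mentails_overL z1 z2 G D1 D2 B C : msound (z1, G) B ->
  mentails (z1 ++ z2, D1 ++ TF (Over C B) :: G ++ D2) (z2, D1 ++ TF C :: D2).
Proof.
move=> HG; apply: mentails_intro => [|Hs]; first by stoup_incl.
have HGs : nullable (stoups (z1, G)) by apply: nullable_incl Hs; stoup_incl.
by rewrite !flE; exact: (entails_frame (fl D1) (fl D2) (entails_overL C (HG HGs))).
Qed.

Lemma mentails_underL z1 z2 G D1 D2 A C : msound (z1, G) A ->
  mentails (z1 ++ z2, D1 ++ G ++ TF (Under A C) :: D2) (z2, D1 ++ TF C :: D2).
Proof.
move=> HG; apply: mentails_intro => [|Hs]; first by stoup_incl.
have HGs : nullable (stoups (z1, G)) by apply: nullable_incl Hs; stoup_incl.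
by rewrite !flE; move: (entails_frame (fl D1) (fl D2) (entails_underL C (HG HGs))); rewrite -catA.
Qed.

Lemma mentails_bangL z G1 A G2 :
  mentails (z, G1 ++ TF (Bang A) :: G2) (z ++ [:: A], G1 ++ G2).
Proof.
move=> u; rewrite /msem !stoupsE !flE.
move=> -[Hs /csem_cat [u1 [_ [Hu1 [_ [u2 [[-> HA] Hu2 ->]]] ->]]]].
exists (u1 ++ u2); last exact: der_refl.
split; last by apply/csem_cat; exists u1, u2.
move=> C; rewrite -catA In_cat => -[HC|[<-|HC]] //.
- by apply: Hs; apply/In_cat; left.
- by apply: Hs; apply/In_cat; right.
Qed.

Lemma mentails_bangP z G1 A G2 :
  mentails (z ++ [:: A], G1 ++ G2) (z, G1 ++ TF A :: G2).
Proof.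
move=> u; rewrite /msem !stoupsE !flE => -[Hs /csem_cat [u1 [u2 [Hu1 Hu2 ->]]]].
have HA : sem A [::] by apply: Hs; rewrite !In_cat /=; tauto.
exists (u1 ++ [::] ++ u2); last exact: der_refl.
split; first by apply: nullable_incl Hs; stoup_incl.
by apply/csem_cat; exists u1, ([::] ++ u2); split=> //; exists [::], u2.
Qed.

Lemma msound_brk X C : msound ([::], [:: brk X]) C <-> msound X C.
Proof. by rewrite /msound /brk !stoupsE !flE. Qed.

Lemma M_sound v X C : Mder v X C -> msound X C.
Proof.
elim=> {v X C}.
- move=> v X Y C _ HX /mf_equiv_flat [Ef Ps] HY; rewrite -Ef; apply: HX.
  by move=> A /(Permutation_in _ Ps) /HY.
- by move=> v A _; apply: entails_refl.
- by move=> v _; apply: entails_one.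
- by move=> v K z1 G B z2 D1 C D2 D _ HG _; apply/msound_fill/mentails_overL.
- by move=> v z G B C _; rewrite /msound !stoupsE !flE => HC /HC /entails_overR.
- by move=> v K z1 G A z2 D1 C D2 D _ HG _; apply/msound_fill/mentails_underL.
- by move=> v z G A C _; rewrite /msound !stoupsE !flE => HC /HC /entails_underR.
- move=> v K z D1 A B D2 D _; apply: msound_fill.
  exact: (mentails_local z D1 D2 [:: TF (Prod A B)] [:: TF A; TF B] erefl (entails_prodL A B)).
- move=> v z1 D z2 G A B _ HA _ HB; rewrite /msound !stoupsE -catA !nullable_cat !flE.
  by move=> [Hz1 [Hz2 [HD HG]]]; apply: entails_prodR; [apply: HA|apply: HB]; apply/nullable_cat.
- move=> v K z D1 D2 A _; apply: msound_fill.
  exact: (mentails_local z D1 D2 [:: TF One] [::] erefl entails_oneL).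
- move=> v K z D1 A D2 B _; apply: msound_fill.
  exact: (mentails_local z D1 D2 [:: TB [::] [:: TF (Binv A)]] [:: TF A] erefl (entails_binvL A)).
- by move=> v X A _ /msound_brk.
- move=> v K z D1 A D2 B _; apply: msound_fill.
  exact: (mentails_local z D1 D2 [:: TF (Dia A)] [:: TB [::] [:: TF A]] erefl (entails_diaL A)).
- by move=> v X A _ /msound_brk.
- by move=> v K z A G1 G2 B _; apply/msound_fill/mentails_bangL.
- by move=> v K z G1 A G2 B _; apply/msound_fill/mentails_bangP.
- by move=> z B _ HB /HB; apply: (entails_bangR [::]).
- move=> K z1 z2 G1 G2 G3 B _ _; apply: msound_fill.
  by apply: mentails_incl; [rewrite !flE|stoup_incl].
- by move=> z B _ _ HB /HB; apply: (entails_bangR [::]).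
- move=> K z1 z2 z' G1 G2 G3 C _ _; apply: msound_fill.
  by apply: mentails_incl; [rewrite !flE|stoup_incl].
- by move=> A B _ HB /HB; apply: (entails_bangR [:: A]).
- move=> K z A G1 G2 G3 B _; apply: msound_fill.
  by apply: mentails_incl; [rewrite !flE|stoup_incl].
- by move=> A B _ HB /HB; apply: (entails_bangR [::]).
- move=> K z A z' G1 G2 G3 B _; apply: msound_fill.
  by apply: mentails_incl; [rewrite !flE|stoup_incl].
Qed.

Lemma entails_ffill K X Y C : entails (ffl X) (ffl Y) ->
  entails (ffl (ffill K Y)) [:: C] -> entails (ffl (ffill K X)) [:: C].
Proof.
have [l [r HK]] := ffill_split K; rewrite !HK.
by move=> HXY; apply: entails_trans; apply: entails_frame.
Qed.

Lemma F_sound v X C : Fder v X C -> entails (ffl X) [:: C].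
Proof.
elim=> {v X C}.
- by move=> v A; apply: entails_refl.
- by move=> v; apply: entails_one.
- move=> v K G B D1 C D2 D _ HG _; apply: entails_ffill; rewrite !fflE.
  exact: (entails_frame (ffl D1) (ffl D2) (entails_overL C HG)).
- by move=> v G B C _; rewrite !fflE; apply: entails_overR.
- move=> v K G A D1 C D2 D _ HG _; apply: entails_ffill; rewrite !fflE.
  by move: (entails_frame (ffl D1) (ffl D2) (entails_underL C HG)); rewrite -catA.
- by move=> v G A C _; rewrite !fflE; apply: entails_underR.
- move=> v K D1 A B D2 D _; apply: entails_ffill; rewrite !fflE.
  exact: (entails_frame (ffl D1) (ffl D2) (entails_prodL A B)).
- by move=> v D G A B _ HA _ HB; rewrite !fflE; apply: entails_prodR.
- move=> v K D1 D2 A _; apply: entails_ffill; rewrite !fflE.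
  exact: (entails_frame (ffl D1) (ffl D2) entails_oneL).
- move=> v K D1 A D2 B _; apply: entails_ffill; rewrite !fflE.
  exact: (entails_frame (ffl D1) (ffl D2) (entails_binvL A)).
- by move=> v X A _; rewrite !fflE.
- move=> v K D1 A D2 B _; apply: entails_ffill; rewrite !fflE.
  exact: (entails_frame (ffl D1) (ffl D2) (entails_diaL A)).
- by move=> v X A _; rewrite !fflE.
- move=> v K D1 A D2 C _; apply: entails_ffill; rewrite !fflE.
  exact: (entails_frame (ffl D1) (ffl D2) (entails_bangL A)).
- move=> v K D1 A Phi D2 C _; apply: entails_ffill; rewrite !fflE.
  by move: (entails_frame (ffl D1) (ffl D2) (entails_bangs_left [:: A] (ffl Phi))); rewrite -catA.
- move=> v K D1 A Phi D2 C _; apply: entails_ffill; rewrite !fflE (catA (ffl Phi) [:: Bang A]).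
  exact: (entails_frame (ffl D1) (ffl D2) (entails_bangs_right [:: A] (ffl Phi))).
- move=> v Pi A K G1 G2 C _ HPi _; apply: entails_ffill; rewrite !fflE.
  exact: (entails_frame (ffl G1) (ffl G2) HPi).
- by move=> As B _ _; rewrite !fflE; apply: entails_bangR.
- move=> K As G1 G2 G3 C _ _; apply: entails_ffill; rewrite !fflE -catA.
  exact: entails_bangs_dup.
- by move=> A B _; rewrite !fflE; apply: (entails_bangR [:: A]).
- move=> K A G1 G2 G3 C _; apply: entails_ffill; rewrite !fflE.
  exact: (entails_bangs_dup [:: A]).
Qed.

(** * Coding productions *)

Definition step_closed (P : seq sym -> Prop) :=
  forall u v l r, List.In (l, r) (t0rules Gr) -> P (u ++ l ++ v) -> P (u ++ r ++ v).

Lemma step_closed_der P : step_closed P -> forall x y, der x y -> P x -> P y.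
Proof. by move=> HP x y; elim=> // {}x {}y z [u v l r Hlr] _ IH /(HP _ _ _ _ Hlr). Qed.

Definition code (x : sym) := Var (pickle x).
Definition codes (s : seq sym) := map code s.
Definition prodf (As : seq formula) := foldr Prod One As.
Definition rule_formula (lr : seq sym * seq sym) :=
  Over (prodf (codes lr.1)) (prodf (codes lr.2)).
Definition start := code (inr (t0start Gr)).
Definition target_formula (Zs Ps : seq formula) := Over (Prod start (prodf Zs)) (prodf Ps).

Lemma sem_code x u : sem (code x) u <-> der [:: x] u.
Proof. by rewrite /= pickleK. Qed.

Lemma sem_prodf_codes s u : sem (prodf (codes s)) u <-> der s u.
Proof.
elim: s u => [|x s IH] u /=; first by split=> [->|/der_nil //]; apply: der_refl.
rewrite pickleK; split=> [[a [b [Ha /IH Hb Hd]]]|Hd].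
  exact: der_trans (der_cat Ha Hb) Hd.
by exists [:: x], s; split=> //; [apply: der_refl|apply/IH/der_refl].
Qed.

Lemma csem_codes s : csem (codes s) s.
Proof. by elim: s => //= x s IH; exists [:: x], s; split=> //; apply/sem_code/der_refl. Qed.

Lemma sem_rule_formula lr : List.In lr (t0rules Gr) -> sem (rule_formula lr) [::].
Proof.
case: lr => l r Hlr a /sem_prodf_codes Ha; apply/sem_prodf_codes.
exact: der_trans (der_rule Hlr) Ha.
Qed.

Lemma sem_prodf_nil As : nullable As -> sem (prodf As) [::].
Proof.
elim: As => [|A As IH] HAs //=; exists [::], [::]; split; last exact: der_refl.
  by apply: HAs; left.
by apply: IH => B HB; apply: HAs; right.
Qed.

Definition empty_only (As : seq formula) := forall A, List.In A As -> forall u, sem A u -> u = [::].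

Lemma sem_prodf_empty As u : empty_only As -> sem (prodf As) u -> u = [::].
Proof.
elim: As u => [|A As IH] u HAs //= [a [b [Ha Hb]]].
have -> : a = [::] by apply: (HAs A) => //; left.
have -> : b = [::] by apply: IH Hb => B HB; apply: HAs; right.
exact: der_nil.
Qed.

Lemma target_sound Zs Ps w : nullable Ps -> empty_only Zs ->
  sem (target_formula Zs Ps) (map inl w) -> t0language Gr w.
Proof.
move=> HPs HZs /(_ [::] (sem_prodf_nil Ps HPs)) [a [b [/sem_code Ha Hb]]].
by rewrite (sem_prodf_empty Zs b HZs Hb) !cats0; apply: der_trans Ha.
Qed.

(** * Completeness of the bracket-free calculi *)

Definition bang_rules := [seq Bang (rule_formula lr) | lr <- t0rules Gr].
Definition E_goal := Prod start (prodf bang_rules).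
Definition E_target := target_formula bang_rules bang_rules.

Lemma bracket_free_prodf_codes s : bracket_free (prodf (codes s)).
Proof. by elim: s. Qed.

Lemma E_prodR_all c As : (forall A, List.In A As -> bracket_free A) -> Eder c As (prodf As).
Proof.
elim: As => [|A As IH] HAs; first exact: E_one.
apply: (@E_prodR c [:: A] As); first by apply: E_ax; apply: HAs; left.
by apply: IH => B HB; apply: HAs; right.
Qed.

Lemma E_prodL_all c D1 As D2 C : Eder c (D1 ++ As ++ D2) C -> Eder c (D1 ++ prodf As :: D2) C.
Proof.
elim: As D1 => [|A As IH] D1 H; first exact: E_oneL.
by apply: E_prodL; move: (IH (D1 ++ [:: A])); rewrite -!catA; apply.
Qed.

Lemma E_bang_move c D1 D2 E1 E2 A C : D1 ++ D2 = E1 ++ E2 ->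
  Eder c (D1 ++ Bang A :: D2) C -> Eder c (E1 ++ Bang A :: E2) C.
Proof.
move=> E12 /(@E_bangP2 c [::] A D1 D2 C) /=; rewrite E12.
exact: (@E_bangP1 c [::] A E1 E2 C).
Qed.

Lemma E_apply_rule c D1 D2 l r C : Eder c (D1 ++ codes l ++ D2) C ->
  Eder c (D1 ++ Bang (rule_formula (l, r)) :: codes r ++ D2) C.
Proof.
move/E_prodL_all=> H; apply: E_bangL; apply: E_overL H.
by apply: E_prodR_all => A /List.in_map_iff [x [<- _]].
Qed.

Definition E_inv c x := Eder c (codes x ++ bang_rules) E_goal.

Lemma E_fire c : step_closed (E_inv c).
Proof.
move=> u v l r Hlr; have Hin : List.In (Bang (rule_formula (l, r))) bang_rules.
  by apply/List.in_map_iff; exists (l, r).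
have [R1 [R2 ER]] := List.in_split _ _ Hin.
rewrite /E_inv /codes !map_cat ER -!catA => H.
have {}H := E_apply_rule c (codes u) _ l r _ H.
rewrite !catA; apply: E_bangC.
by apply: (E_bang_move c (codes u) _ _ _ _ _ _ H); rewrite -!catA.
Qed.

Lemma E_complete c w : t0language Gr w -> Eder c (codes (map inl w)) E_target.
Proof.
move=> Hw; apply: E_overR; apply: (E_prodL_all c _ _ [::]); rewrite cats0.
apply: (step_closed_der (E_inv c) (E_fire c) _ _ Hw).
apply: (@E_prodR c [:: start]); first exact: E_ax.
by apply: E_prodR_all => _ /List.in_map_iff [lr [<- _]]; split; apply: bracket_free_prodf_codes.
Qed.

Lemma E_language c w : Eder c (codes (map inl w)) E_target <-> t0language Gr w.
Proof.
split; last exact: E_complete.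
move/E_sound/entails1/(_ _ (csem_codes _)); apply: target_sound.
  move=> _ /List.in_map_iff [lr [<- Hlr]]; split=> //; exact: sem_rule_formula.
by move=> _ /List.in_map_iff [lr [<- _]] u [].
Qed.

(** * Completeness of the bracketed calculi *)

Inductive version := V2015 | V2018.

Definition token := Dia (Dia One).

Definition rule_copy (s : version) lr :=
  Binv (Prod (if s is V2018 then Bang token else One) (Bang (rule_formula lr))).
Definition stock s := [seq rule_copy s lr | lr <- t0rules Gr] ++ [:: token].
Definition stock_goal s := Prod start (prodf (stock s)).
Definition stock_target s := target_formula (stock s) (map Bang (stock s)).

Lemma nullable_stock s : nullable (stock s).
Proof.
move=> A /In_cat [/List.in_map_iff [lr [<- Hlr]]|[<-|//]] //=.
exists [::], [::]; split; last exact: der_refl.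
- by case: s.
- by split=> //; apply: sem_rule_formula.
Qed.

Lemma empty_only_stock s : empty_only (stock s).
Proof.
move=> A /In_cat [/List.in_map_iff [lr [<- Hlr]]|[<-|//]] u //=.
move=> [a [b [Ha [-> _] Hd]]].
have Ea : a = [::] by case: s Ha => [|[]].
by move: Hd; rewrite Ea => /der_nil.
Qed.

Lemma stock_target_sound s w : sem (stock_target s) (map inl w) -> t0language Gr w.
Proof.
apply: target_sound; last exact: empty_only_stock.
by move=> _ /List.in_map_iff [A [<- HA]]; split=> //; apply: (nullable_stock s).
Qed.

Section StoupCalculi.
Variable v : mcalc.

Definition M_inv s x := Mder v (stock s, map TF (codes x)) (stock_goal s).

Lemma M_perm z z' G C : Permutation z z' -> Mder v (z, G) C -> Mder v (z', G) C.
Proof.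
move=> Hz H; apply: (M_stoup H); split=> //=.
by elim: G {H} => // t G IH; constructor=> //; apply: tt_equiv_refl.
Qed.

Lemma M_prodR_all As : Mder v ([::], map TF As) (prodf As).
Proof.
elim: As => [|A As IH]; first exact: M_one.
exact: (@M_prodR v [::] [:: TF A] [::] _ _ _ (M_ax v A) IH).
Qed.

Lemma M_prodL_all z D1 As D2 C :
  Mder v (z, D1 ++ map TF As ++ D2) C -> Mder v (z, D1 ++ TF (prodf As) :: D2) C.
Proof.
elim: As D1 => [|A As IH] D1 H; first exact: (@M_oneL v MHole).
apply: (@M_prodL v MHole); move: (IH (D1 ++ [:: TF A])); rewrite -!catA; exact.
Qed.

Lemma M_stoup_prodf As : Mder v (As, [::]) (prodf As).
Proof.
elim: As => [|A As IH]; first exact: M_one.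
apply: (@M_prodR v [:: A] [::] As [::]) IH.
exact: (@M_bangP v MHole [::] [::] A [::] A (M_ax v A)).
Qed.

Lemma M_bangL_all z D As C :
  Mder v (z ++ As, D) C -> Mder v (z, D ++ map TF (map Bang As)) C.
Proof.
elim: As z => [|A As IH] z H; first by move: H; rewrite !cats0.
apply: (@M_bangL v MHole z A D); apply: IH; by rewrite -catA.
Qed.

Lemma M_apply_rule z U V l r C : Mder v (z, U ++ map TF (codes l) ++ V) C ->
  Mder v (z, U ++ TF (rule_formula (l, r)) :: map TF (codes r) ++ V) C.
Proof. by move/M_prodL_all; apply: (@M_overL v MHole [::]); apply: M_prodR_all. Qed.

Lemma M_unbox z U D V C :
  Mder v (z, U ++ TF V :: D) C -> Mder v (z, U ++ TB [:: Binv V] [::] :: D) C.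
Proof.
move/(@M_binvL v MHole z U V D C).
exact: (@M_bangP v (MIn z U MHole D) [::] [::] (Binv V) [::] C).
Qed.

Lemma M_unpack15 z U D R C :
  Mder v (z, U ++ TF R :: D) C -> Mder v (z, U ++ TF (Prod One (Bang R)) :: D) C.
Proof.
move=> H; apply: (@M_prodL v MHole); apply: (@M_oneL v MHole z U).
by apply: (@M_bangL v MHole); apply: (@M_bangP v MHole z U R D C).
Qed.

Lemma M_unpack18 z U D R C : Mder v (z ++ [:: token], U ++ TF R :: D) C ->
  Mder v (z, U ++ TF (Prod (Bang token) (Bang R)) :: D) C.
Proof.
move=> H; apply: (@M_prodL v MHole); apply: (@M_bangL v MHole z token U).
by apply: (@M_bangL v MHole (z ++ [:: token]) R U D); apply: (@M_bangP v MHole _ U R D C).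
Qed.

Lemma M_token z U D C :
  Mder v (z, U ++ TB [::] [:: TB [::] [::]] :: D) C -> Mder v (z ++ [:: token], U ++ D) C.
Proof.
move/(@M_oneL v (MIn z U (MIn [::] [::] MHole [::]) D) [::] [::] [::] C).
move/(@M_diaL v (MIn z U MHole D) [::] [::] One [::] C).
move/(@M_diaL v MHole z U (Dia One) D C).
exact: (@M_bangP v MHole z U token D C).
Qed.

Definition copies15 := forall z A U D C,
  Mder v (z ++ [:: A], U ++ TB [:: A] [::] :: D) C -> Mder v (z ++ [:: A], U ++ D) C.

Definition copies18 := forall z A U D C,
  Mder v (z ++ [:: A], U ++ TB [:: A] [::] :: D) C ->
  Mder v (z ++ [:: A], U ++ TB [::] [:: TB [::] [::]] :: D) C.

Lemma M_fire15 : copies15 -> step_closed (M_inv V2015).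
Proof.
move=> copy u v' l r Hlr; rewrite /M_inv /codes !map_cat => H.
have [z Hs] : exists z, Permutation (stock V2015) (z ++ [:: rule_copy V2015 (l, r)]).
  by apply: In_perm_last; apply/In_cat; left; apply/List.in_map_iff; exists (l, r).
apply: M_perm (Permutation_sym Hs) _; apply: copy; apply: M_unbox; apply: M_unpack15.
by apply: M_apply_rule; apply: M_perm Hs H.
Qed.

Lemma M_fire18 : copies18 -> step_closed (M_inv V2018).
Proof.
move=> copy u v' l r Hlr; rewrite /M_inv /codes !map_cat => H.
have [z Hz] : exists z, Permutation [seq rule_copy V2018 lr | lr <- t0rules Gr]
    (z ++ [:: rule_copy V2018 (l, r)]).
  by apply: In_perm_last; apply/List.in_map_iff; exists (l, r).
apply: M_token; apply: M_perm (Permutation_sym Hz) _; apply: copy.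
apply: M_unbox; apply: M_unpack18; apply: M_apply_rule.
by apply: M_perm H; apply: Permutation_app_tail.
Qed.

Lemma M_complete s w : step_closed (M_inv s) -> t0language Gr w ->
  Mder v ([::], map TF (codes (map inl w))) (stock_target s).
Proof.
move=> Hstep Hw; apply: M_overR; apply: (M_prodL_all [::] _ _ [::]); rewrite cats0.
apply: M_bangL_all; apply: (step_closed_der _ Hstep _ _ Hw).
exact: (@M_prodR v [::] [:: TF start] (stock s) [::] _ _ (M_ax v start) (M_stoup_prodf _)).
Qed.

End StoupCalculi.

Section StoupFreeCalculi.
Variable v : fcalc.

Definition F_inv s x := Fder v (map FF (codes x) ++ fbangs (stock s)) (stock_goal s).

Lemma F_prodR_all As : Fder v (map FF As) (prodf As).
Proof.
elim: As => [|A As IH]; first exact: F_one.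
exact: (@F_prodR v [:: FF A] _ _ _ (F_ax v A) IH).
Qed.

Lemma F_prodL_all D1 As D2 C :
  Fder v (D1 ++ map FF As ++ D2) C -> Fder v (D1 ++ FF (prodf As) :: D2) C.
Proof.
elim: As D1 => [|A As IH] D1 H; first exact: (@F_oneL v FHole).
apply: (@F_prodL v FHole); move: (IH (D1 ++ [:: FF A])); rewrite -!catA; exact.
Qed.

Lemma F_fbangs_prodf As : Fder v (fbangs As) (prodf As).
Proof.
elim: As => [|A As IH]; first exact: F_one.
apply: (@F_prodR v [:: FF (Bang A)] _ _ _ _ IH).
exact: (@F_bangL v FHole [::] A [::] A (F_ax v A)).
Qed.

Lemma F_bang_move D1 D2 E1 E2 A C : D1 ++ D2 = E1 ++ E2 ->
  Fder v (D1 ++ FF (Bang A) :: D2) C -> Fder v (E1 ++ FF (Bang A) :: E2) C.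
Proof.
move=> E12 /(@F_bangP2 v FHole [::] A D1 D2 C) /=; rewrite E12.
exact: (@F_bangP1 v FHole [::] A E1 E2 C).
Qed.

Lemma F_apply_rule D1 D2 l r C : Fder v (D1 ++ map FF (codes l) ++ D2) C ->
  Fder v (D1 ++ FF (rule_formula (l, r)) :: map FF (codes r) ++ D2) C.
Proof. by move/F_prodL_all; apply: (@F_overL v FHole); apply: F_prodR_all. Qed.

Lemma F_unbox D1 D2 V C :
  Fder v (D1 ++ FF V :: D2) C -> Fder v (D1 ++ FB [:: FF (Bang (Binv V))] :: D2) C.
Proof.
move/(@F_binvL v FHole D1 V D2 C).
exact: (@F_bangL v (FIn D1 FHole D2) [::] (Binv V) [::] C).
Qed.

Lemma F_unpack15 D1 D2 R C :
  Fder v (D1 ++ FF R :: D2) C -> Fder v (D1 ++ FF (Prod One (Bang R)) :: D2) C.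
Proof.
move=> H; apply: (@F_prodL v FHole); apply: (@F_oneL v FHole D1).
exact: (@F_bangL v FHole D1 R D2 C).
Qed.

Lemma F_unpack18 D1 D2 R C : Fder v ((D1 ++ [:: FF (Bang token)]) ++ FF R :: D2) C ->
  Fder v (D1 ++ FF (Prod (Bang token) (Bang R)) :: D2) C.
Proof.
move/(@F_bangL v FHole (D1 ++ [:: FF (Bang token)]) R D2 C); rewrite -catA.
exact: (@F_prodL v FHole).
Qed.

Lemma F_token D1 D2 C :
  Fder v (D1 ++ FB [:: FB [::]] :: D2) C -> Fder v (D1 ++ FF (Bang token) :: D2) C.
Proof.
move/(@F_oneL v (FIn D1 (FIn [::] FHole [::]) D2) [::] [::] C).
move/(@F_diaL v (FIn D1 FHole D2) [::] One [::] C).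
move/(@F_diaL v FHole D1 (Dia One) D2 C).
exact: (@F_bangL v FHole D1 token D2 C).
Qed.

Lemma F_complete s w : step_closed (F_inv s) -> t0language Gr w ->
  Fder v (map FF (codes (map inl w))) (stock_target s).
Proof.
move=> Hstep Hw; apply: F_overR; apply: (F_prodL_all _ _ [::]); rewrite cats0.
have -> : map FF (map Bang (stock s)) = fbangs (stock s) by rewrite -map_comp.
apply: (step_closed_der _ Hstep _ _ Hw).
exact: (@F_prodR v [:: FF start] _ _ _ (F_ax v start) (F_fbangs_prodf _)).
Qed.

End StoupFreeCalculi.

Lemma F_fire15 : step_closed (F_inv F2015 V2015).
Proof.
move=> u v l r Hlr; rewrite /F_inv /codes !map_cat -!catA.
have Hin : List.In (rule_copy V2015 (l, r)) (stock V2015).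
  by apply/In_cat; left; apply/List.in_map_iff; exists (l, r).
have [Z1 [Z2 ->]] := List.in_split _ _ Hin; rewrite fbangs_cat /=.
set A := rule_copy V2015 (l, r); set U := map FF _; set W := map FF (map code v).
move=> H; rewrite !catA.
apply: (F_bang_move _ [::] (U ++ map FF (map code r) ++ W ++ fbangs Z1 ++ fbangs Z2)).
  by rewrite -!catA.
apply: (@F15_bangC FHole [:: A] U [::]) => //.
apply: (F_unbox _ (FF (Bang A) :: U)); apply: F_unpack15; apply: F_apply_rule.
rewrite !catA in H; apply: (F_bang_move _ _ _ [::] _ _ _ _ H).
by rewrite -!catA.
Qed.

Lemma F_fire18 : step_closed (F_inv F2018 V2018).
Proof.
move=> u v l r Hlr; rewrite /F_inv /codes /stock !map_cat -!catA.
have Hin : List.In (rule_copy V2018 (l, r)) [seq rule_copy V2018 lr | lr <- t0rules Gr].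
  by apply/List.in_map_iff; exists (l, r).
have [Z1 [Z2 ->]] := List.in_split _ _ Hin; rewrite !fbangs_cat -!catA /=.
set A := rule_copy V2018 (l, r); set T := FF (Bang token).
set U := map FF _; set W := map FF (map code v) ++ fbangs Z1 ++ fbangs Z2.
move=> H; rewrite !catA.
apply: (F_bang_move _ [::] ((U ++ map FF (map code r) ++ W) ++ [:: T])).
  by rewrite /W -!catA.
apply: (F_bang_move _ (FF (Bang A) :: U) (map FF (map code r) ++ W)
                      (FF (Bang A) :: U ++ map FF (map code r) ++ W) [::]).
  by rewrite cats0.
apply: F_token; apply: (@F18_bangC FHole A U [::]).
apply: (F_unbox _ (FF (Bang A) :: U)); apply: F_unpack18; apply: F_apply_rule.
rewrite -!catA; apply: (F_bang_move _ (FF (Bang A) :: U ++ map FF (map code l) ++ W) [::]).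
  by rewrite cats0.
rewrite /W !catA in H.
apply: (F_bang_move _ _ _ [::] ((U ++ map FF (map code l) ++ W) ++ [:: T]) _ _ _ H).
by rewrite /W -!catA.
Qed.

Definition lexicon := [seq (a, code (inl a)) | a <- enum Sigma].

Lemma assigns_codes H w As : assigns (Grammar lexicon H) w As <-> As = codes (map inl w).
Proof.
rewrite /assigns /=; split.
  by elim=> //= a A w' As' /List.in_map_iff [b [[<- <-] _]] _ ->.
move=> ->; elim: w => //= a w IH; constructor=> //.
by apply/List.in_map_iff; exists a; split=> //; apply/In_mem; rewrite mem_enum.
Qed.

Lemma E_grammar c : exists g : grammar Sigma, E_generates c g (t0language Gr).
Proof.
exists (Grammar lexicon E_target) => w; split=> [Hw|[As [/assigns_codes -> /E_language //]]].
by exists (codes (map inl w)); split; [apply/assigns_codes|apply/E_language].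
Qed.

Definition mversion v := match v with M2015 | M2015' => V2015 | M2018 | M2018' => V2018 end.

Lemma M_fires v : step_closed (M_inv v (mversion v)).
Proof.
case: v; [apply: M_fire15|apply: M_fire15|apply: M_fire18|apply: M_fire18] => z A U D C.
- exact: (@M15_bangC MHole z [:: A] U [::] D C).
- exact: (@M15'_bangC MHole z [:: A] [::] U [::] D C).
- exact: (@M18_bangC MHole z A U [::] D C).
- exact: (@M18'_bangC MHole z A [::] U [::] D C).
Qed.

Lemma M_sound_target v s X w : Mder v X (stock_target s) -> stoups X = [::] ->
  mf_flat X = codes (map inl w) -> t0language Gr w.
Proof.
move=> /M_sound HX Hs Hf; apply: (stock_target_sound s).
by move: HX; rewrite /msound Hs Hf => /(_ nullable_nil) /entails1; apply; apply: csem_codes.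
Qed.

Lemma M_grammar v : exists g : grammar Sigma,
  M_s_generates v g (t0language Gr) /\ M_t_generates v g (t0language Gr).
Proof.
have Hc w := M_complete v (mversion v) w (M_fires v).
have Hflat w : mf_flat ([::], map TF (codes (map inl w))) = codes (map inl w).
  exact: fl_mapTF.
exists (Grammar lexicon (stock_target (mversion v))); split=> w; split.
- by move/Hc=> H; exists (codes (map inl w)); split=> //; apply/assigns_codes.
- move=> [As [/assigns_codes -> /M_sound_target]]; apply=> //.
  by rewrite /stoups stl_mapTF.
- move/Hc=> H; exists (codes (map inl w)), ([::], map TF (codes (map inl w))).
  by split; [apply/assigns_codes|split; [apply: mf_nostoup_mapTF|split]].
- move=> [As [Pi [/assigns_codes -> [/mf_nostoup_stoups Hs [Hf H]]]]].
  exact: M_sound_target H Hs Hf.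
Qed.

Definition fversion v := match v with F2015 => V2015 | F2018 => V2018 end.

Lemma F_sound_target v s X w : Fder v X (stock_target s) ->
  ffl X = codes (map inl w) -> t0language Gr w.
Proof.
move=> /F_sound /entails1 HX Hf; apply: (stock_target_sound s).
by apply: HX; rewrite Hf; apply: csem_codes.
Qed.

Lemma F_grammar v : exists g : grammar Sigma,
  F_s_generates v g (t0language Gr) /\ F_t_generates v g (t0language Gr).
Proof.
have Hc w : t0language Gr w -> Fder v (map FF (codes (map inl w))) (stock_target (fversion v)).
  by apply: F_complete; case: v; [apply: F_fire15|apply: F_fire18].
exists (Grammar lexicon (stock_target (fversion v))); split=> w; split.
- by move/Hc=> H; exists (codes (map inl w)); split=> //; apply/assigns_codes.
- move=> [As [/assigns_codes -> /F_sound_target]]; apply.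
  exact: ffl_mapFF.
- move/Hc=> H; exists (codes (map inl w)), (map FF (codes (map inl w))).
  by split; [apply/assigns_codes|split=> //; apply: ffl_mapFF].
- by move=> [As [Pi [/assigns_codes -> [Hf H]]]]; apply: F_sound_target H Hf.
Qed.

End Encoding.

Theorem theorem11 (Sigma : finType) (M : seq Sigma -> Prop) :
  recursively_enumerable M ->
  (exists g : grammar Sigma, E_generates Emult g M) /\
  (exists g : grammar Sigma, E_generates Ermult g M) /\
  (forall v : mcalc, exists g : grammar Sigma,
      M_s_generates v g M /\ M_t_generates v g M) /\
  (forall v : fcalc, exists g : grammar Sigma,
      F_s_generates v g M /\ F_t_generates v g M).
Proof.
move=> [Gr HM]; split; [|split; [|split]].
- by have [g Hg] := E_grammar Gr Emult; exists g => w; rewrite HM.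
- by have [g Hg] := E_grammar Gr Ermult; exists g => w; rewrite HM.
- move=> v; have [g [Hs Ht]] := M_grammar Gr v.
  by exists g; split=> w; rewrite HM; [apply: Hs|apply: Ht].
- move=> v; have [g [Hs Ht]] := F_grammar Gr v.
  by exists g; split=> w; rewrite HM; [apply: Hs|apply: Ht].
Qed.
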